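(* Let $\mathfrak A,\mathfrak B$ be $*$-algebras and let $\sigma,\tau:\mathfrak A\to\mathfrak B$ be $*$-linear mappings. Then every $*$-$(\sigma,\tau)$-derivation $d:\mathfrak A\to\mathfrak B$ is a $*$-$\frac{\sigma+\tau}{2}$-derivation, i.e. $d(ab)=d(a)\frac{\sigma+\tau}{2}(b)+\frac{\sigma+\tau}{2}(a)d(b)$ for all $a,b\in\mathfrak A$.
   Context: A map $\sigma$ between $*$-algebras is $*$-linear if it is linear and $\sigma(a^* )=\sigma(a)^*$. A $*$-$(\sigma,\tau)$-derivation is a linear map $d:\mathfrak A\to\mathfrak B$ with $d(a^* )=d(a)^*$ and $d(ab)=d(a)\sigma(b)+\tau(a)d(b)$ for all $a,b\in\mathfrak A$. For a linear map $\gamma:\mathfrak A\to\mathfrak B$, a $*$-$\gamma$-derivation is a $*$-preserving linear map $d$ with $d(ab)=d(a)\gamma(b)+\gamma(a)d(b)$ for all $a,b$. *)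

(* *-algebras over a numeric closed field C (e.g. algC = complex
   algebraic numbers, or any field with conjugation). Algebras are possibly
   non-unital: a C-vector space with an associative bilinear product. *)
From mathcomp Require Import all_boot all_order all_algebra.
Set Implicit Arguments. Unset Strict Implicit. Unset Printing Implicit Defensive.
Import Order.TTheory GRing.Theory Num.Theory.
Local Open Scope ring_scope.

Definition is_algebra (C : numClosedFieldType) (A : lmodType C)
  (mul : A -> A -> A) : Prop :=
  [/\ forall a b c, mul a (mul b c) = mul (mul a b) c,
      forall k a b c, mul (k *: a + b) c = k *: mul a c + mul b c
    & forall k a b c, mul a (k *: b + c) = k *: mul a b + mul a c].

Definition is_star_algebra (C : numClosedFieldType) (A : lmodType C)
  (mul : A -> A -> A) (star : A -> A) : Prop :=
  [/\ is_algebra mul,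
      forall a b, star (a + b) = star a + star b,
      forall (k : C) a, star (k *: a) = k^* *: star a,
      forall a b, star (mul a b) = mul (star b) (star a)
    & forall a, star (star a) = a].

Definition is_linear (C : numClosedFieldType) (A B : lmodType C) (f : A -> B) :=
  forall (k : C) x y, f (k *: x + y) = k *: f x + f y.

Definition star_linear (C : numClosedFieldType) (A B : lmodType C)
  (starA : A -> A) (starB : B -> B) (f : A -> B) : Prop :=
  is_linear f /\ forall a, f (starA a) = starB (f a).

Definition star_sigma_tau_derivation (C : numClosedFieldType) (A B : lmodType C)
  (mulA : A -> A -> A) (starA : A -> A) (mulB : B -> B -> B) (starB : B -> B)
  (sigma tau d : A -> B) : Prop :=
  [/\ is_linear d, forall a, d (starA a) = starB (d a)
    & forall a b, d (mulA a b) = mulB (d a) (sigma b) + mulB (tau a) (d b)].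

Definition star_gamma_derivation (C : numClosedFieldType) (A B : lmodType C)
  (mulA : A -> A -> A) (starA : A -> A) (mulB : B -> B -> B) (starB : B -> B)
  (gamma d : A -> B) : Prop :=
  [/\ is_linear d, forall a, d (starA a) = starB (d a)
    & forall a b, d (mulA a b) = mulB (d a) (gamma b) + mulB (gamma a) (d b)].

(* Applying the involution to the product rule and using that [sigma], [tau]
   and [d] commute with it gives the mirrored rule
   [d (a b) = sigma a d b + d a tau b]; averaging it with the original rule
   yields the rule for [(sigma + tau) / 2]. *)
From mathcomp Require Import all_boot all_order all_algebra.
Import GRing.Theory Num.Theory.
Set Implicit Arguments. Unset Strict Implicit. Unset Printing Implicit Defensive.
Local Open Scope ring_scope.

Section AlgebraProduct.

Variables (C : numClosedFieldType) (B : lmodType C) (mul : B -> B -> B).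
Hypothesis algB : is_algebra mul.

Lemma algebra_mul0l c : mul 0 c = 0.
Proof.
case: algB => _ mulZDl _; have := mulZDl 1 0 0 c.
rewrite !scale1r addr0 => h.
by apply: (addrI (mul 0 c)); rewrite addr0 -h.
Qed.

Lemma algebra_mul0r a : mul a 0 = 0.
Proof.
case: algB => _ _ mulZDr; have := mulZDr 1 a 0 0.
rewrite !scale1r addr0 => h.
by apply: (addrI (mul a 0)); rewrite addr0 -h.
Qed.

Lemma algebra_mulDl a b c : mul (a + b) c = mul a c + mul b c.
Proof. by case: algB => _ mulZDl _; rewrite -[a]scale1r mulZDl !scale1r. Qed.

Lemma algebra_mulDr a b c : mul a (b + c) = mul a b + mul a c.
Proof. by case: algB => _ _ mulZDr; rewrite -[b]scale1r mulZDr !scale1r. Qed.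

Lemma algebra_mulZl k a c : mul (k *: a) c = k *: mul a c.
Proof.
by case: algB => _ mulZDl _; rewrite -[k *: a]addr0 mulZDl algebra_mul0l addr0.
Qed.

Lemma algebra_mulZr k a c : mul a (k *: c) = k *: mul a c.
Proof.
by case: algB => _ _ mulZDr; rewrite -[k *: c]addr0 mulZDr algebra_mul0r addr0.
Qed.

Lemma derivation_avg (A : Type) (mulA : A -> A -> A) (sigma tau d : A -> B) :
    (forall a b, d (mulA a b) = mul (d a) (sigma b) + mul (tau a) (d b)) ->
    (forall a b, d (mulA a b) = mul (sigma a) (d b) + mul (d a) (tau b)) ->
  forall a b, d (mulA a b) =
    mul (d a) ((2 : C)^-1 *: (sigma b + tau b)) +
    mul ((2 : C)^-1 *: (sigma a + tau a)) (d b).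
Proof.
move=> rule mirrored_rule a b.
rewrite algebra_mulZr algebra_mulZl algebra_mulDl algebra_mulDr -scalerDr.
have -> : mul (d a) (sigma b) + mul (d a) (tau b) +
          (mul (sigma a) (d b) + mul (tau a) (d b)) = d (mulA a b) + d (mulA a b).
  by rewrite {1}rule mirrored_rule addrACA [RHS]addrACA [mul (tau a) _ + _]addrC.
by rewrite -[X in X + X]scale1r -scalerDl scalerA mulVf ?scale1r ?pnatr_eq0.
Qed.

End AlgebraProduct.

Lemma star_derivation_mirrored (C : numClosedFieldType) (A B : lmodType C)
    (mulA : A -> A -> A) (starA : A -> A) (mulB : B -> B -> B) (starB : B -> B)
    (sigma tau d : A -> B) :
    (forall a b, starA (mulA a b) = mulA (starA b) (starA a)) ->
    (forall a b, starB (a + b) = starB a + starB b) ->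
    (forall a b, starB (mulB a b) = mulB (starB b) (starB a)) ->
    (forall a, starB (starB a) = a) ->
    (forall a, sigma (starA a) = starB (sigma a)) ->
    (forall a, tau (starA a) = starB (tau a)) ->
    star_sigma_tau_derivation mulA starA mulB starB sigma tau d ->
  forall a b, d (mulA a b) = mulB (sigma a) (d b) + mulB (d a) (tau b).
Proof.
move=> starA_mul starB_add starB_mul starBK sigma_star tau_star [_ d_star d_mul] a b.
rewrite -[d _]starBK -d_star starA_mul d_mul !d_star sigma_star tau_star.
by rewrite starB_add !starB_mul !starBK addrC.
Qed.

Theorem proposition3p1 (C : numClosedFieldType) (A B : lmodType C)
  (mulA : A -> A -> A) (starA : A -> A) (mulB : B -> B -> B) (starB : B -> B)
  (sigma tau d : A -> B) :
  is_star_algebra mulA starA -> is_star_algebra mulB starB ->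
  star_linear starA starB sigma -> star_linear starA starB tau ->
  star_sigma_tau_derivation mulA starA mulB starB sigma tau d ->
  star_gamma_derivation mulA starA mulB starB
    (fun a => (2 : C)^-1 *: (sigma a + tau a)) d.
Proof.
move=> [_ _ _ starA_mul _] [algB starB_add _ starB_mul starBK]
  [_ sigma_star] [_ tau_star] der.
have mirrored := star_derivation_mirrored starA_mul starB_add starB_mul starBK
  sigma_star tau_star der.
case: der => d_lin d_star d_mul.
by split=> //; apply: derivation_avg.
Qed.
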